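(* Let $X$ be a set of pointed Kripke models, $\Lambda$ a normal modal logic sound with respect to $X$, and $D\subseteq\boldsymbol{\mathcal{L}}_{\Lambda}$ a descriptor for $X$. Then for every $d_w\in\mathcal{D}_{(X,D)}$, the metric topology of $d_w$ on $X_D$ equals the Stone-like topology $\mathcal{T}_D$.
   Context: Signature: countable non-empty sets $\Phi$, $\mathcal{I}$; $\mathcal{L}$: $\varphi ::= \top\mid p\mid\neg\varphi\mid\varphi\wedge\varphi\mid\Box_i\varphi$ on pointed Kripke models, standard semantics. $\boldsymbol{\varphi}$: formulas $\Lambda$-provably equivalent to $\varphi$; $\boldsymbol{\mathcal{L}}_{\Lambda}=\{\boldsymbol{\varphi}\}$. A descriptor is $D\subseteq\boldsymbol{\mathcal{L}}_{\Lambda}$; $\boldsymbol{x}_D=\{y\in X:\forall\boldsymbol{\varphi}\in D,\ y\models\varphi\iff x\models\varphi\}$, $X_D=\{\boldsymbol{x}_D:x\in X\}$. With an enumeration $\boldsymbol{\varphi}_1,\boldsymbol{\varphi}_2,\dots$ of $D$ and $w:D\to\mathbb{R}_{>0}$ with $\sum_k w(\boldsymbol{\varphi}_k)<\infty$, $d_w(\boldsymbol{x},\boldsymbol{y})=\sum_k w(\boldsymbol{\varphi}_k)d_k(\boldsymbol{x},\boldsymbol{y})$, $d_k=0$ if $x,y$ agree on $\varphi_k$ and $1$ otherwise; $\mathcal{D}_{(X,D)}$ is the set of all such $d_w$. The Stone-like topology $\mathcal{T}_D$ on $X_D$ is the topology generated by the subbasis of sets $\{\boldsymbol{x}\in X_D:x\models\varphi\}$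 and $\{\boldsymbol{x}\in X_D:x\models\neg\varphi\}$ for $\boldsymbol{\varphi}\in D$. *)

From HB Require Import structures.
From mathcomp Require Import all_boot all_order all_algebra.
From mathcomp Require Import all_classical all_reals all_analysis.
Set Implicit Arguments. Unset Strict Implicit. Unset Printing Implicit Defensive.
Import Order.TTheory GRing.Theory Num.Theory.
Import numFieldNormedType.Exports.
Local Open Scope classical_set_scope.
Local Open Scope ring_scope.

Inductive mform (Phi I : Type) : Type :=
| FTop : mform Phi I
| FVar : Phi -> mform Phi I
| FNeg : mform Phi I -> mform Phi I
| FAnd : mform Phi I -> mform Phi I -> mform Phi I
| FBox : I -> mform Phi I -> mform Phi I.
Arguments FTop {Phi I}.

Definition FImp Phi I (a b : mform Phi I) := FNeg (FAnd a (FNeg b)).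
Definition FIff Phi I (a b : mform Phi I) := FAnd (FImp a b) (FImp b a).

Fixpoint fsubst Phi I (s : Phi -> mform Phi I) (f : mform Phi I) : mform Phi I :=
  match f with
  | FTop => FTop
  | FVar p => s p
  | FNeg a => FNeg (fsubst s a)
  | FAnd a b => FAnd (fsubst s a) (fsubst s b)
  | FBox i a => FBox i (fsubst s a)
  end.

Record pmodel (Phi I : Type) := PModel {
  world : Type;
  rel : I -> world -> world -> Prop;
  val : Phi -> world -> Prop;
  point : world }.

Fixpoint sat_at Phi I (M : pmodel Phi I) (w : world M) (f : mform Phi I) : Prop :=
  match f with
  | FTop => True
  | FVar p => @val Phi I M p w
  | FNeg a => ~ sat_at w a
  | FAnd a b => sat_at w a /\ sat_at w b
  | FBox i a => forall v, @rel Phi I M i w v -> sat_at v a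
  end.

Definition sat Phi I (x : pmodel Phi I) (f : mform Phi I) : Prop := sat_at (point x) f.

(* propositional tautologies: true under every boolean valuation that is
   homomorphic w.r.t. T, neg, and (atoms and boxed formulas are free) *)
Definition bool_val Phi I (v : mform Phi I -> bool) :=
  [/\ v FTop = true,
      forall a, v (FNeg a) = ~~ v a &
      forall a b, v (FAnd a b) = v a && v b].
Definition tautology Phi I (f : mform Phi I) :=
  forall v : mform Phi I -> bool, bool_val v -> v f = true.

Definition normal_logic Phi I (L : set (mform Phi I)) :=
  [/\ (forall f, tautology f -> L f),
      (forall i a b, L (FImp (FBox i (FImp a b)) (FImp (FBox i a) (FBox i b)))),
      (forall a b, L (FImp a b) -> L a -> L b),
      (forall i a, L a -> L (FBox i a)) &
      (forall s a, L a -> L (fsubst s a))].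

Definition sound_wrt Phi I (L : set (mform Phi I)) (X : set (pmodel Phi I)) :=
  forall f, L f -> forall x, X x -> sat x f.

Definition fclass Phi I (L : set (mform Phi I)) (f : mform Phi I) : set (mform Phi I) :=
  [set g | L (FIff f g)].
Definition LLambda Phi I (L : set (mform Phi I)) : set (set (mform Phi I)) :=
  [set c | exists f, c = fclass L f].

Definition agree Phi I (x y : pmodel Phi I) (c : set (mform Phi I)) :=
  forall f, c f -> (sat y f <-> sat x f).

Definition xD Phi I (X : set (pmodel Phi I)) (D : set (set (mform Phi I)))
  (x : pmodel Phi I) : set (pmodel Phi I) :=
  [set y | X y /\ forall c, D c -> agree x y c].

Definition XD Phi I (X : set (pmodel Phi I)) (D : set (set (mform Phi I)))
  : set (set (pmodel Phi I)) :=
  [set p | exists2 x, X x & p = xD X D x].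

(* an enumeration phi_1, phi_2, ... of D: a bijection e from an initial
   segment J of nat (finite or all of nat) onto D *)
Definition enumeration Phi I (D : set (set (mform Phi I)))
  (J : set nat) (e : nat -> set (mform Phi I)) :=
  [/\ (forall k m, J k -> (m <= k)%N -> J m),
      (forall k, J k -> D (e k)),
      (forall c, D c -> exists2 k, J k & e k = c) &
      (forall k m, J k -> J m -> e k = e m -> k = m)].

Definition dk (R : realType) Phi I (c : set (mform Phi I)) (p q : set (pmodel Phi I)) : R :=
  if `[< exists x y, [/\ p x, q y & ~ agree x y c] >] then 1 else 0.

Definition wseq (R : realType) Phi I (J : set nat) (e : nat -> set (mform Phi I))
  (w : set (mform Phi I) -> R) : nat -> R :=
  fun k => if `[< J k >] then w (e k) else 0.

Definition dw (R : realType) Phi I (J : set nat) (e : nat -> set (mform Phi I))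
  (w : set (mform Phi I) -> R) (p q : set (pmodel Phi I)) : R :=
  let a : R^nat := fun k => if `[< J k >] then w (e k) * dk R (e k) p q else 0 in
  limn (series a).

Definition metric_open (R : realType) T (S : set T) (d : T -> T -> R) (U : set T) :=
  U `<=` S /\
  forall p, U p -> exists2 eps : R, 0 < eps & forall q, S q -> d p q < eps -> U q.

Definition is_topology T (S : set T) (O : set (set T)) :=
  [/\ (forall U, O U -> U `<=` S),
      O S,
      (forall U V, O U -> O V -> O (U `&` V)) &
      (forall F : set (set T), F `<=` O -> O (\bigcup_(U in F) U))].

Definition generated_open T (S : set T) (B : set (set T)) (U : set T) :=
  forall O, is_topology S O -> B `<=` O -> O U.

Definition stone_subbasis Phi I (X : set (pmodel Phi I)) (D : set (set (mform Phi I)))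
  : set (set (set (pmodel Phi I))) :=
  [set U | exists2 c, D c &
     (U = [set p | XD X D p /\ exists x f, [/\ p x, c f & sat x f]] \/
      U = [set p | XD X D p /\ exists x f, [/\ p x, c f & sat x (FNeg f)]])].

Definition stone_open Phi I (X : set (pmodel Phi I)) (D : set (set (mform Phi I))) :=
  generated_open (XD X D) (stone_subbasis X D).

From HB Require Import structures.
From mathcomp Require Import all_boot all_order all_algebra.
From mathcomp Require Import all_classical all_reals all_analysis.
Import Order.TTheory GRing.Theory Num.Theory.
Import numFieldNormedType.Exports.
Local Open Scope classical_set_scope.
Local Open Scope ring_scope.

(* A disagreement on phi_k alone already puts p and q at d_w-distance at least
   w(phi_k), so the d_w-ball of radius w(phi_k) around p stays inside the
   subbasic Stone set of p determined by phi_k: Stone-open sets are metric-open.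
   Conversely, the points agreeing with p on phi_k for all k < N form a finite
   intersection of subbasic sets, and on it d_w(p, -) is bounded by the tail
   sum of the weights from N on, which is small for N large: metric-open sets
   are Stone-open.  Soundness makes all formulas of a Lambda-class take the same
   value on X, so "p satisfies the class" is independent of the representatives. *)

Set Implicit Arguments.
Unset Strict Implicit.
Unset Printing Implicit Defensive.

Section nonnegative_series.
Variables (R : realType) (u : R^nat).
Hypothesis u_ge0 : forall n, 0 <= u n.

Lemma nondecreasing_series_ge0 : nondecreasing_seq (series u).
Proof. by move=> n m; apply: nondecreasing_series => k _ _; exact: u_ge0. Qed.

Hypothesis cvg_u : cvgn (series u).

Lemma le_lim_series k : u k <= limn (series u).
Proof.
apply: le_trans (nondecreasing_cvgn_le nondecreasing_series_ge0 cvg_u k.+1).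
by rewrite seriesSr lerDr sumr_ge0.
Qed.

Lemma lim_series_tail_lt (eps : R) : 0 < eps ->
  exists N, limn (series u) - series u N < eps.
Proof.
move=> /((cvgrPdist_lt _ _).1 cvg_u)[N _ tailN]; exists N.
exact: le_lt_trans (ler_norm _) (tailN N (leqnn N)).
Qed.

Lemma lim_series_le_tail (v : R^nat) N :
  (forall n, 0 <= v n) -> (forall n, v n <= u n) ->
  (forall n, (n < N)%N -> v n = 0) ->
  limn (series v) <= limn (series u) - series u N.
Proof.
move=> v_ge0 le_vu v_head.
have series_vN : series v N = 0.
  by rewrite /series /= big_nat big1 // => n /andP[_]; exact: v_head.
apply: limr_le; first exact: series_le_cvg v_ge0 u_ge0 le_vu cvg_u.
exists N => // n /= le_Nn.
rewrite -[series v n]subr0 -series_vN sub_series_geq //.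
apply: le_trans (_ : series u n - series u N <= _).
  by rewrite sub_series_geq // ler_sum.
by rewrite lerD2r (nondecreasing_cvgn_le nondecreasing_series_ge0 cvg_u).
Qed.

End nonnegative_series.

Section topology_on.
Variables (T : Type) (S : set T) (O : set (set T)).
Hypothesis topO : is_topology S O.

Lemma open_of_locally_open (U : set T) :
  (forall p, U p -> exists V, [/\ O V, V p & V `<=` U]) -> O U.
Proof.
case: topO => _ _ _ openU locU.
suff -> : U = \bigcup_(V in [set V | O V /\ V `<=` U]) V.
  by apply: openU => V [].
apply/seteqP; split => [p /locU[V [OV Vp VU]] | p [V [_ VU] /VU //]].
by exists V.
Qed.

Lemma open_finite_meet (P : set nat) (V : nat -> set T) N :
  (forall k, P k -> O (S `&` V k)) ->
  O [set q | S q /\ forall k, (k < N)%N -> P k -> V k q].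
Proof.
case: topO => _ openS openI _ openV.
elim: N => [|N IH].
  by rewrite (_ : [set q | _] = S) //; apply/seteqP; split => [q []|q Sq].
have [PN|nPN] := pselect (P N).
  rewrite (_ : [set q | _] =
    [set q | S q /\ forall k, (k < N)%N -> P k -> V k q] `&` (S `&` V N)).
    exact: openI IH (openV N PN).
  apply/seteqP; split => [q [Sq Vq]|q [[Sq Vq] [_ VNq]]].
    by split; [split => // k /ltnW; exact: Vq | split => //; exact: Vq].
  by split => // k; rewrite ltnS leq_eqVlt => /predU1P[->|/Vq].
rewrite (_ : [set q | _] = [set q | S q /\ forall k, (k < N)%N -> P k -> V k q]) //.
apply/seteqP; split => [q [Sq Vq]|q [Sq Vq]].
  by split => // k /ltnW; exact: Vq.
by split => // k; rewrite ltnS leq_eqVlt => /predU1P[->|/Vq].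
Qed.

End topology_on.

Lemma metric_open_topology (R : realType) T (S : set T) (d : T -> T -> R) :
  is_topology S (metric_open S d).
Proof.
split.
- by move=> U [].
- by split => // p Sp; exists 1.
- move=> U V [US openU] [_ openV]; split => [p [/US] //|p [Up Vp]].
  have [[eU eU_gt0 ballU] [eV eV_gt0 ballV]] := (openU p Up, openV p Vp).
  exists (Order.min eU eV) => [|q Sq]; first by rewrite lt_min eU_gt0.
  by rewrite lt_min => /andP[dU dV]; split; [exact: ballU | exact: ballV].
- move=> F openF; split => [p [U /openF[US _] /US] //|p [U FU Up]].
  have [eps eps_gt0 ballU] := (openF U FU).2 p Up.
  by exists eps => // q Sq dq; exists U => //; exact: ballU.
Qed.

Lemma sat_FIff Phi I (x : pmodel Phi I) (a b : mform Phi I) :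
  sat x (FIff a b) -> (sat x a <-> sat x b).
Proof.
rewrite /sat /FIff /FImp /= => -[ab ba].
by split => sx; apply/not_notP => nsx; [apply: ab | apply: ba].
Qed.

Lemma tautology_FIff_refl Phi I (f : mform Phi I) : tautology (FIff f f).
Proof. by move=> v [_ vN vA]; rewrite /FIff /FImp !(vA, vN); case: (v f). Qed.

Section classes_in_models.
Variables (Phi I : Type) (X : set (pmodel Phi I)) (Lam : set (mform Phi I)).
Variable D : set (set (mform Phi I)).
Hypothesis normal_Lam : normal_logic Lam.
Hypothesis sound_Lam : sound_wrt Lam X.
Hypothesis D_sub : D `<=` LLambda Lam.

Lemma sat_fclass_iff c x f g : D c -> X x -> c f -> c g ->
  (sat x f <-> sat x g).
Proof.
move=> /D_sub[f0 ->] Xx cf cg.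
have := sat_FIff (sound_Lam cf Xx); have := sat_FIff (sound_Lam cg Xx).
by move=> <- <-.
Qed.

Lemma fclass_inhabited c : D c -> exists f, c f.
Proof.
move=> /D_sub[f ->]; exists f.
by case: normal_Lam => taut _ _ _ _; exact/taut/tautology_FIff_refl.
Qed.

Lemma XD_witness p : XD X D p -> exists2 z, X z & p z.
Proof. by case=> z Xz ->; exists z. Qed.

Definition sat_class (p : set (pmodel Phi I)) (c : set (mform Phi I)) :=
  exists x f, [/\ p x, c f & sat x f].

Definition agree_on (c : set (mform Phi I)) (p q : set (pmodel Phi I)) :=
  forall x y, p x -> q y -> agree x y c.

Lemma sat_class_all p c x f : XD X D p -> D c -> sat_class p c -> p x -> c f -> sat x f.
Proof.
case=> z Xz -> Dc [x1 [f1 [[_ agree1] cf1 sat1]]] [_ agree_x] cf.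
apply/(agree_x c Dc f cf)/(sat_fclass_iff Dc Xz cf1 cf).
exact/(agree1 c Dc f1 cf1).
Qed.

Lemma sat_class_FNeg p c : XD X D p -> D c ->
  (exists x f, [/\ p x, c f & sat x (FNeg f)]) <-> ~ sat_class p c.
Proof.
move=> XDp Dc; split => [[x [f [px cf nsat]]] /sat_class_all sat_all|nsat].
  exact/nsat/sat_all.
have [[z _ pz] [f cf]] := (XD_witness XDp, fclass_inhabited Dc).
by exists z, f; split => // sz; apply: nsat; exists z, f.
Qed.

Lemma agree_onE c p q : XD X D p -> XD X D q -> D c ->
  agree_on c p q <-> (sat_class p c <-> sat_class q c).
Proof.
move=> XDp XDq Dc; split => [agree_pq|sat_class_pq x y px qy f cf].
  have [[x _ px] [y _ qy]] := (XD_witness XDp, XD_witness XDq).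
  split => [[x1 [f [px1 cf sat1]]]|[y1 [f [qy1 cf sat1]]]].
    by exists y, f; split => //; exact/(agree_pq x1 y px1 qy f cf).
  by exists x, f; split => //; exact/(agree_pq x y1 px qy1 f cf).
split => [sy|sx].
  by apply: (sat_class_all XDp Dc _ px cf); apply/sat_class_pq; exists y, f.
by apply: (sat_class_all XDq Dc _ qy cf); apply/sat_class_pq; exists x, f.
Qed.

Lemma agree_on_refl c p : XD X D p -> D c -> agree_on c p p.
Proof. by move=> XDp Dc; apply/agree_onE. Qed.

Lemma stone_subbasis_agree_on V p : stone_subbasis X D V -> V p ->
  exists2 c, D c & forall q, V q <-> XD X D q /\ agree_on c p q.
Proof.
move=> [c Dc PN] Vp; exists c => // q.
case: PN Vp => [->|->] [XDp sat_p].
  split => -[XDq] /=; rewrite (agree_onE XDp XDq Dc); first by split => //; tauto.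
  by move=> E; split => //; apply/E.
move: sat_p; rewrite (sat_class_FNeg XDp Dc) => nsat_p.
split => -[XDq] /=; rewrite (agree_onE XDp XDq Dc) (sat_class_FNeg XDq Dc).
  by split => //; tauto.
by move=> E; split => //; tauto.
Qed.

Lemma agree_on_stone_subbasis c p : XD X D p -> D c ->
  stone_subbasis X D (XD X D `&` agree_on c p).
Proof.
move=> XDp Dc; exists c => //.
have [sat_p|nsat_p] := pselect (sat_class p c); [left|right];
  apply/seteqP; split => q [XDq] /=;
  rewrite (agree_onE XDp XDq Dc) ?(sat_class_FNeg XDq Dc); split => //; tauto.
Qed.

End classes_in_models.

Lemma dk_eq0 (R : realType) Phi I (c : set (mform Phi I)) p q :
  dk R c p q = 0 <-> agree_on c p q.
Proof.
split => [dk0 x y px qy|agree_pq]; last first.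
  by rewrite /dk asboolF // => -[x [y [px qy]]]; apply; exact: agree_pq.
apply/not_notP => disagree; move: dk0; rewrite /dk asboolT; last by exists x, y.
exact/eqP/oner_neq0.
Qed.

Section weighted_metric.
Variables (R : realType) (Phi I : Type) (D : set (set (mform Phi I))).
Variables (J : set nat) (e : nat -> set (mform Phi I)) (w : set (mform Phi I) -> R).
Hypothesis e_in_D : forall k, J k -> D (e k).
Hypothesis w_gt0 : forall c, D c -> 0 < w c.
Hypothesis cvg_w : cvgn (series (wseq J e w)).

Let dw_term p q : R^nat :=
  fun k => if `[< J k >] then w (e k) * dk R (e k) p q else 0.

Let dwE p q : dw J e w p q = limn (series (dw_term p q)).
Proof. by []. Qed.

Lemma wseq_ge0 k : 0 <= wseq J e w k.
Proof. by rewrite /wseq; case: asboolP => // /e_in_D/w_gt0/ltW. Qed.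

Let dw_term_ge0 p q k : 0 <= dw_term p q k.
Proof.
rewrite /dw_term /dk; case: asboolP => // /e_in_D/w_gt0/ltW w_ge0.
by case: asboolP => _; rewrite ?mulr1 ?mulr0.
Qed.

Let dw_term_le_wseq p q k : dw_term p q k <= wseq J e w k.
Proof.
rewrite /dw_term /wseq /dk; case: asboolP => // /e_in_D/w_gt0/ltW w_ge0.
by case: asboolP => _; rewrite ?mulr1 ?mulr0.
Qed.

Lemma agree_on_of_dw_lt p q k : J k -> dw J e w p q < w (e k) ->
  agree_on (e k) p q.
Proof.
move=> Jk dpq; apply/(@dk_eq0 R).
have cvg_term := series_le_cvg (dw_term_ge0 p q) wseq_ge0 (dw_term_le_wseq p q) cvg_w.
move: (le_lim_series (dw_term_ge0 p q) cvg_term k).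
rewrite -dwE /dw_term asboolT // /dk; case: asboolP => // _.
by rewrite mulr1 => /(lt_le_trans dpq); rewrite ltxx.
Qed.

Lemma dw_le_tail p q N : (forall k, (k < N)%N -> J k -> agree_on (e k) p q) ->
  dw J e w p q <= limn (series (wseq J e w)) - series (wseq J e w) N.
Proof.
move=> agree_head; rewrite dwE.
apply: lim_series_le_tail wseq_ge0 cvg_w _ _ (dw_term_ge0 p q) (dw_term_le_wseq p q) _.
move=> k kN; rewrite /dw_term; case: asboolP => // Jk.
by rewrite (@dk_eq0 R _ _ _ _ _).2 ?mulr0 //; exact: agree_head.
Qed.

End weighted_metric.

Theorem proposition20 (R : realType) (Phi I : countType)
  (Phi_ne : inhabited Phi) (I_ne : inhabited I)
  (X : set (pmodel Phi I)) (Lam : set (mform Phi I))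
  (D : set (set (mform Phi I))) (J : set nat) (e : nat -> set (mform Phi I))
  (w : set (mform Phi I) -> R) :
  normal_logic Lam -> sound_wrt Lam X ->
  D `<=` LLambda Lam ->
  enumeration D J e ->
  (forall c, D c -> 0 < w c) ->
  cvgn (series (wseq J e w)) ->
  forall U : set (set (pmodel Phi I)),
    metric_open (XD X D) (dw J e w) U <-> stone_open X D U.
Proof.
move=> normal_Lam sound_Lam D_sub [_ e_in_D e_onto _] w_gt0 cvg_w U; split.
- move=> [U_sub openU] O topO subbasis_open.
  apply: (open_of_locally_open topO) => p Up.
  have [eps eps_gt0 ballU] := openU p Up.
  have [N tailN] := lim_series_tail_lt cvg_w eps_gt0.
  exists [set q | XD X D q /\ forall k, (k < N)%N -> J k -> agree_on (e k) p q].
  split.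
  + apply: (open_finite_meet topO) => k Jk; apply/subbasis_open.
    by apply: (agree_on_stone_subbasis normal_Lam sound_Lam D_sub (U_sub p Up) (e_in_D k Jk)).
  + split=> [|k _ Jk]; first exact: U_sub.
    by apply: (agree_on_refl sound_Lam D_sub (U_sub p Up) (e_in_D k Jk)).
  + move=> q [XDq agree_head]; apply: ballU => //.
    exact: le_lt_trans (dw_le_tail e_in_D w_gt0 cvg_w agree_head) tailN.
- apply; first exact: metric_open_topology.
  move=> V subbasisV; split; first by case: subbasisV => c _ [->|->] q [].
  move=> p Vp.
  have [c Dc agreeV] := stone_subbasis_agree_on normal_Lam sound_Lam D_sub subbasisV Vp.
  have [k Jk ekc] := e_onto c Dc; subst c.
  exists (w (e k)) => [|q XDq dpq]; first exact: w_gt0.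
  by apply/agreeV; split => //; apply: (agree_on_of_dw_lt e_in_D w_gt0 cvg_w Jk dpq).
Qed.
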